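(* Let $G$ and $H$ be graphs such that the direct product $G\times H$ is a balanced distance magic graph, and let $\ell$ be a balanced distance magic labeling of $G\times H$ in which $(g,h)$ and $(g',h')$ are twins, where $g\neq g'$ and $h\neq h'$. Let $\widehat\ell$ be obtained from $\ell$ by exchanging the labels of $(g',h')$ and $(g',h)$, i.e. $\widehat\ell(g',h)=\ell(g',h')$, $\widehat\ell(g',h')=\ell(g',h)$, and $\widehat\ell(a,b)=\ell(a,b)$ for all other vertices. Then $\widehat\ell$ is a balanced distance magic labeling of $G\times H$ in which $(g,h)$ and $(g',h)$ are twins.
   Context: All graphs are finite and simple. For a graph $G$ and vertex $x$, $N(x)=N_G(x)$ is the (open) neighborhood of $x$. A distance magic labeling of a graph $G$ of order $N$ is a bijection $\ell\colon V(G)\to\{1,\dots,N\}$ for which there is a constant $k$ such that the weight $w(x)=\sum_{y\in N(x)}\ell(y)$ equals $k$ for every $x\in V(G)$. A balanced distance magic labeling of a graph $G$ with an even number $N$ of vertices is a distance magic labeling $\ell$ such that for every $w\in V(G)$: whenever $u\in N(w)$ has $\ell(u)=i$, there is $v\in N(w)$ with $\ell(v)=N+1-i$. Under such $\ell$, the vertices labeled $i$ and $N+1-i$ are called twins (with respect to $\ell$). $G$ is a balanced distance magic graph if it has an even number of vertices and admits a balanced distance magic labeling. The direct product $G\times H$ has vertex set $V(G)\times V(H)$, with $(g,h)$ adjacent to $(g',h')$ iff $gg'\in E(G)$ and $hh'\in E(H)$. *)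

From mathcomp Require Import all_boot.
Set Implicit Arguments. Unset Strict Implicit. Unset Printing Implicit Defensive.

Definition simple_graph (T : finType) (e : rel T) : Prop :=
  symmetric e /\ irreflexive e.

Definition nbhd (T : finType) (e : rel T) (x : T) : {set T} := [set y | e x y].

Definition direct_prod (TG TH : finType) (eG : rel TG) (eH : rel TH)
  : rel (TG * TH) := fun p q => eG p.1 q.1 && eH p.2 q.2.

Definition weight (T : finType) (e : rel T) (l : T -> nat) (x : T) : nat :=
  \sum_(y in nbhd e x) l y.

(* l is a bijection V(G) -> {1,...,N}, N = |V(G)| (injective + range in
   [1,N] on a set of size N). *)
Definition labeling (T : finType) (l : T -> nat) : Prop :=
  injective l /\ forall x, 1 <= l x <= #|T|.

Definition distance_magic_labeling (T : finType) (e : rel T) (l : T -> nat)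
  : Prop :=
  labeling l /\ exists k, forall x, weight e l x = k.

Definition balanced_dm_labeling (T : finType) (e : rel T) (l : T -> nat)
  : Prop :=
  ~~ odd #|T| /\ distance_magic_labeling e l /\
  forall w u, u \in nbhd e w ->
    exists2 v, v \in nbhd e w & l v = #|T|.+1 - l u.

Definition balanced_dm_graph (T : finType) (e : rel T) : Prop :=
  exists l, balanced_dm_labeling e l.

Definition twins (T : finType) (l : T -> nat) (x y : T) : Prop :=
  l y = #|T|.+1 - l x.

Definition swap_labels (T : finType) (l : T -> nat) (a b : T) : T -> nat :=
  fun x => if x == a then l b else if x == b then l a else l x.

From mathcomp Require Import all_boot fingroup perm.
Set Implicit Arguments. Unset Strict Implicit. Unset Printing Implicit Defensive.

(* In a balanced distance magic labeling, twins x, y have the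
   same open neighbourhood: if w is adjacent to x, balance gives a
   neighbour of w carrying the twin label of l x, which by injectivity is y.
   The magic constant forces G x H to have either no isolated vertex or
   only isolated vertices.  In the first case g has a neighbour in G, and
   then equality of the neighbourhoods of (g,h) and (g',h') transfers to
   (g',h') and (g',h): the vertices h and h' have the same neighbours in H.
   In the second case all neighbourhoods are empty.  Exchanging the labels
   of two vertices with equal neighbourhoods is relabelling along a
   transposition that preserves every neighbourhood, and any such
   relabelling keeps the labeling balanced distance magic. *)

Section BalancedLabeling.

Variables (T : finType) (e : rel T) (l : T -> nat).

(* Twinship is symmetric, since labels lie in [1, N]. *)
Lemma twins_sym : labeling l -> forall x y, twins l x y -> twins l y x.
Proof.
move=> [_ Lrng] x y; rewrite /twins => ->.
by case/andP: (Lrng x) => lx1 lxN; rewrite subKn // leqW.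
Qed.

Hypothesis Hl : balanced_dm_labeling e l.

Lemma twins_same_nbhd x y : twins l x y -> forall w, e w x = e w y.
Proof.
case: Hl => _ [[[Linj _] _] Hbal].
have adj_twin a b : twins l a b -> forall w, e w a -> e w b.
  move=> Hab w Hwa; have [|v Hv Hlv] := Hbal w a; first by rewrite inE.
  have <- : v = b by apply: Linj; rewrite Hlv Hab.
  by rewrite inE in Hv.
move=> Hxy w; apply/idP/idP; first exact: adj_twin.
apply: adj_twin; apply: twins_sym Hxy; by case: Hl => _ [[]].
Qed.

Lemma dm_isolated_dichotomy :
  (forall x, exists y, e x y) \/ (forall x y, ~~ e x y).
Proof.
case: Hl => _ [[[_ Lrng] [k Hk]] _].
have [[u v] /= Huv | Hnone] := pickP (fun p : T * T => e p.1 p.2).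
  left; move=> x; apply/existsP; apply: contraT; rewrite negb_exists => /forallP Hx.
  have w0 : weight e l x = 0.
    by apply: big_pred0 => y; rewrite inE (negbTE (Hx y)).
  have : 0 < weight e l u.
    rewrite /weight (bigD1 v) ?inE //=.
    by case/andP: (Lrng v) => lv _; rewrite ltn_addr.
  by rewrite (Hk u) -(Hk x) w0.
by right; move=> x y; rewrite (negbT (Hnone (x, y))).
Qed.

End BalancedLabeling.

Lemma balanced_relabel (T : finType) (e : rel T) (l l' : T -> nat)
    (s : {perm T}) :
  (forall w y, e w (s y) = e w y) -> l' =1 l \o s ->
  balanced_dm_labeling e l -> balanced_dm_labeling e l'.
Proof.
move=> Hs Hl' [Hev [[[Linj Lrng] [k Hk]] Hbal]].
have sN w y : (s y \in nbhd e w) = (y \in nbhd e w) by rewrite !inE Hs.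
split=> //; split; first split.
- split=> [x y|x]; rewrite !Hl' //= => /Linj; exact: perm_inj.
- exists k => w; rewrite -(Hk w) /weight [RHS](reindex_inj (@perm_inj _ s)) /=.
  by apply: eq_big => [y|y _]; rewrite ?sN ?Hl'.
move=> w u Hu; have [|v Hv Hlv] := Hbal w (s u); first by rewrite sN.
exists ((s^-1)%g v); first by rewrite -sN permKV.
by rewrite !Hl' /= permKV Hlv.
Qed.

Lemma swap_labelsE (T : finType) (l : T -> nat) a b :
  swap_labels l a b =1 l \o tperm a b.
Proof.
move=> x; rewrite /swap_labels /=.
case: tpermP => [->|->|xa xb]; first by rewrite eqxx.
  by case: (b =P a) => [->|_]; rewrite ?eqxx.
by rewrite (introF eqP xa) (introF eqP xb).
Qed.

Lemma tperm_nbhd (T : finType) (e : rel T) a b :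
  (forall w, e w a = e w b) -> forall w y, e w (tperm a b y) = e w y.
Proof. by move=> Hab w y; case: tpermP => [->|->|//]; rewrite Hab. Qed.

(* In G x H with G symmetric: if (g,h) and (g',h') have the same
   neighbourhood and g has a neighbour, then h and h' have the same
   neighbours in H, so (g',h') and (g',h) have the same neighbourhood. *)
Lemma direct_prod_shift_nbhd (TG TH : finType) (eG : rel TG) (eH : rel TH)
    (g g' x0 : TG) (h h' : TH) :
  symmetric eG -> eG g x0 ->
  (forall w, direct_prod eG eH w (g, h) = direct_prod eG eH w (g', h')) ->
  forall w, direct_prod eG eH w (g', h') = direct_prod eG eH w (g', h).
Proof.
move=> Gsym Hgx0 Heq [x y]; rewrite /direct_prod /=.
have nbr_h_h' : eH y h -> eH y h'.
  move=> Hyh; have := Heq (x0, y).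
  by rewrite /direct_prod /= Gsym Hgx0 Hyh => /esym/andP[].
apply/andP/andP => [[Hxg' Hyh'] | [Hxg' /nbr_h_h' Hyh']]; split => //.
by have := Heq (x, y); rewrite /direct_prod /= Hxg' Hyh' => /andP[].
Qed.

Theorem lemma1 (TG TH : finType) (eG : rel TG) (eH : rel TH)
  (HG : simple_graph eG) (HH : simple_graph eH)
  (Hbal : balanced_dm_graph (direct_prod eG eH))
  (l : TG * TH -> nat) (Hl : balanced_dm_labeling (direct_prod eG eH) l)
  (g g' : TG) (h h' : TH)
  (Htw : twins l (g, h) (g', h')) (Hg : g != g') (Hh : h != h') :
  balanced_dm_labeling (direct_prod eG eH) (swap_labels l (g', h') (g', h)) /\
  twins (swap_labels l (g', h') (g', h)) (g, h) (g', h).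
Proof.
have same_nbhd w :
    direct_prod eG eH w (g', h') = direct_prod eG eH w (g', h).
  case: (dm_isolated_dichotomy Hl) => [Hnbr | Hiso]; last first.
    by rewrite (negbTE (Hiso w (g', h'))) (negbTE (Hiso w (g', h))).
  have [[x0 y0] /andP[Hgx0 _]] := Hnbr (g, h).
  exact: direct_prod_shift_nbhd (proj1 HG) Hgx0 (twins_same_nbhd Hl Htw) w.
split.
  exact: balanced_relabel (tperm_nbhd same_nbhd) (swap_labelsE _ _ _) Hl.
rewrite /twins /swap_labels eqxx.
have [gh_a gh_b] : ((g, h) == (g', h')) = false /\ ((g, h) == (g', h)) = false.
  by rewrite !xpair_eqE (negbTE Hg).
by rewrite xpair_eqE (negbTE Hh) andbF gh_a gh_b.
Qed.
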